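(* For the push-pull ring with $M\ge 2$ servers in the critical case $\lambda_j=\mu_j$ for all $j$, the action drift matrix $\mathbf{D}$ satisfies $\mathrm{rank}(\mathbf{D})=M$ if $M$ is odd and $\mathrm{rank}(\mathbf{D})=M-1$ if $M$ is even. Moreover, when $M$ is even, the vector $\boldsymbol{\alpha}=(+\lambda_1^{-1},-\lambda_2^{-1},+\lambda_3^{-1},-\lambda_4^{-1},\dots,+\lambda_{M-1}^{-1},-\lambda_M^{-1})'$ satisfies $\mathbf{D}\boldsymbol{\alpha}=\mathbf{0}$.
   Context: A push-pull ring has $M\ge2$ servers and $M$ job streams, with strictly positive rates $\lambda_j,\mu_j$; indices are modulo $M$ on $\{1,\dots,M\}$. Server $j$ can either push on stream $j$ (exponential rate $\lambda_j$, adding a job to queue $j$) or pull from queue $j-1$ (exponential rate $\mu_{j-1}$, removing a job from queue $j-1$). An action is an element $a\in\{\text{push},\text{pull}\}^M$ specifying the operation of each server; there are $2^M$ actions. For an action $a$, let $r_a$ be the sum of the rates of the $M$ chosen operations, and let the drift vector $\boldsymbol{\Delta}_a\in\mathbb{R}^M$ be the expected one-step increment of the embedded jump chain under $a$ (each chosen operation completes first with probability its rate divided by $r_a$): its $j$-th entry is $\big(\lambda_j\mathbf{1}\{\text{server } j \text{ pushes}\}-\mu_j\mathbf{1}\{\text{server } j+1 \text{ pulls}\}\big)/r_a$. The action drift matrix $\mathbf{D}$ is the $2^M\times M$ matrix whose rows are $\boldsymbol{\Delta}_a'$ over all $2^M$ actions $a$. *)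

From mathcomp Require Import all_boot all_order all_algebra.
Set Implicit Arguments. Unset Strict Implicit. Unset Printing Implicit Defensive.
Import Order.TTheory GRing.Theory Num.Theory.
Local Open Scope ring_scope.

(* Servers / streams are indexed by 'I_M (0-based: paper's j is our j-1).
   Indices are cyclic: the successor of j is ordS j, the predecessor ord_pred j. *)

(* An action assigns to each server a boolean: true = push, false = pull. *)
Definition action (M : nat) := {ffun 'I_M -> bool}.

(* Total rate r_a: server k pushing contributes lambda_k, pulling from
   queue k-1 contributes mu_{k-1}. *)
Definition total_rate (R : fieldType) (M : nat) (lam mu : 'I_M -> R)
    (a : action M) : R :=
  \sum_(k < M) (if a k then lam k else mu (ord_pred k)).

Definition drift (R : fieldType) (M : nat) (lam mu : 'I_M -> R)
    (a : action M) : 'rV[R]_M :=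
  \row_(j < M)
    (((if a j then lam j else 0) - (if ~~ a (ordS j) then mu j else 0))
       / total_rate lam mu a).

Definition drift_matrix (R : fieldType) (M : nat) (lam mu : 'I_M -> R)
    : 'M[R]_(#|{: action M}|, M) :=
  \matrix_(i < #|{: action M}|) drift lam mu (enum_val i).

(* alpha = (+1/lam_1, -1/lam_2, +1/lam_3, ...) as a column vector
   (0-based index i even <-> paper index i+1 odd <-> sign +). *)
Definition alpha_vec (R : fieldType) (M : nat) (lam : 'I_M -> R) : 'cV[R]_M :=
  \col_(i < M) ((if odd i then -1 else 1) * (lam i)^-1).

From mathcomp Require Import all_boot all_order all_algebra.
From mathcomp Require Import ring.
Import Order.TTheory GRing.Theory Num.Theory.
Set Implicit Arguments. Unset Strict Implicit.
Local Open Scope ring_scope.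

(* In the critical case, put y_j := lam_j x_j.  Row a of D x is then
   sum_j ([a_j] - [~ a_(j+1)]) y_j divided by the positive total rate.  The
   all-pull action forces sum_j y_j = 0, and the action in which only server
   k+1 pushes then forces y_(k+1) = - y_k; conversely every such alternating y
   annihilates all rows, since shifting the index turns sum_j [a_(j+1)] y_j into
   - sum_j [a_j] y_j.  On a cycle of length M an alternating sequence vanishes
   when M is odd and is a multiple of (1, -1, 1, ...) when M is even, so the
   right kernel of D is 0, resp. the line spanned by alpha. *)

Definition alternating (V : zmodType) (M : nat) (y : 'I_M -> V) :=
  forall k, y (ordS k) = - y k.

Lemma sum_ordS (V : nmodType) (M : nat) (f : 'I_M -> V) :
  \sum_k f (ordS k) = \sum_k f k.
Proof. by rewrite [RHS](reindex_inj (@ordS_inj M)). Qed.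

Lemma alternating_sum_eq0 (R : numDomainType) (M : nat) (y : 'I_M -> R) :
  alternating y -> \sum_k y k = 0.
Proof.
move=> alt_y; apply/eqP; rewrite -eqNr -sumrN -(sum_ordS y).
by apply/eqP/eq_bigr => k _; rewrite alt_y.
Qed.

Lemma alternatingE (R : pzRingType) (n : nat) (y : 'I_n.+1 -> R) :
  alternating y -> forall k : 'I_n.+1, y k = (-1) ^+ k * y ord0.
Proof.
move=> alt_y k.
suff y_inord i : (i < n.+1)%N -> y (inord i) = (-1) ^+ i * y ord0.
  by rewrite -{1}(inord_val k) y_inord.
elim: i => [|i IHi] lt_i.
  by rewrite expr0 mul1r; congr y; apply: val_inj; rewrite /= inordK.
have -> : inord i.+1 = ordS (inord i : 'I_n.+1).
  by apply: val_inj; rewrite /= !inordK ?modn_small // ltnW.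
by rewrite alt_y IHi ?(ltnW lt_i) // exprS mulN1r mulNr.
Qed.

Lemma alternating_odd_eq0 (R : numDomainType) (n : nat) (y : 'I_n.+1 -> R) :
  odd n.+1 -> alternating y -> forall k, y k = 0.
Proof.
move=> odd_n alt_y k; rewrite (alternatingE alt_y).
suff -> : y ord0 = 0 by rewrite mulr0.
have ordS_max : ordS (ord_max : 'I_n.+1) = ord0.
  by apply: val_inj; rewrite /= modnn.
apply/eqP; rewrite -eqNr; apply/eqP.
rewrite -[in RHS]ordS_max alt_y [y ord_max](alternatingE alt_y) /= -signr_odd.
by move: odd_n => /= /negbTE ->; rewrite mul1r.
Qed.

Lemma alternating_sign (R : pzRingType) (M : nat) :
  ~~ odd M -> alternating (fun k : 'I_M => (-1) ^+ k : R).
Proof.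
move=> even_M k; rewrite -signr_odd -[in RHS]signr_odd /=.
have := ltn_ord k; rewrite leq_eqVlt => /orP [/eqP Mk | lt_kM].
  have odd_k : odd k by rewrite -[odd k]negbK -/(odd k.+1) Mk.
  by rewrite Mk modnn odd_k expr1 opprK.
by rewrite modn_small //= signrN.
Qed.

Definition drift_flux (R : pzRingType) (M : nat) (a : action M) (y : 'I_M -> R) :=
  \sum_j ((a j)%:R - (~~ a (ordS j))%:R) * y j.

Lemma drift_fluxE (R : pzRingType) (M : nat) (a : action M) (y : 'I_M -> R) :
  drift_flux a y =
  \sum_(j | a j) y j - \sum_j y j + \sum_(j | a (ordS j)) y j.
Proof.
rewrite /drift_flux !(big_mkcond (fun j => a _)) -sumrB -big_split.
apply: eq_bigr => j _; case: (a j); case: (a (ordS j));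
  by rewrite /= ?(subr0, subrr, sub0r, mul1r, mul0r, mulN1r, addr0, add0r, addNr).
Qed.

Lemma drift_flux_eq0P (R : numDomainType) (M : nat) (y : 'I_M -> R) :
  (forall a, drift_flux a y = 0) <-> alternating y.
Proof.
split=> [flux0 k | alt_y a].
  have sum_y : \sum_j y j = 0.
    have := flux0 [ffun=> false]; rewrite drift_fluxE.
    rewrite big_pred0 => [|j]; last by rewrite ffunE.
    rewrite [X in _ + X]big_pred0 => [|j]; last by rewrite ffunE.
    by rewrite sub0r addr0 => /eqP; rewrite oppr_eq0 => /eqP.
  have := flux0 [ffun j => j == ordS k]; rewrite drift_fluxE sum_y subr0.
  rewrite (big_pred1 (ordS k)) => [|j]; last by rewrite ffunE.
  rewrite (big_pred1 k) => [|j]; last by rewrite ffunE (inj_eq (@ordS_inj _)).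
  by move/eqP; rewrite addr_eq0 => /eqP.
rewrite drift_fluxE alternating_sum_eq0 // subr0.
rewrite [\sum_(j | a j) _](reindex_inj (@ordS_inj M)) -big_split /=.
by rewrite big1 // => j _; rewrite alt_y addNr.
Qed.

Lemma total_rate_gt0 (R : numFieldType) (M : nat) (lam mu : 'I_M -> R)
    (a : action M) (i0 : 'I_M) :
  (forall j, 0 < lam j) -> (forall j, 0 < mu j) -> 0 < total_rate lam mu a.
Proof.
move=> lam_gt0 mu_gt0; rewrite /total_rate (bigD1 i0) //=.
apply: ltr_pwDl; first by case: (a i0).
by apply: sumr_ge0 => i _; case: (a i); exact: ltW.
Qed.

Lemma sub_kermx_tr (F : fieldType) (m n : nat) (A : 'M[F]_(m, n)) (u : 'rV_n) :
  (u <= kermx A^T)%MS = (A *m u^T == 0).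
Proof. by rewrite sub_kermx -(inj_eq (@trmx_inj _ _ _)) trmx_mul trmxK trmx0. Qed.

Section CriticalRing.

Variables (R : numFieldType) (n : nat) (lam mu : 'I_n.+1 -> R).
Hypotheses (lam_gt0 : forall j, 0 < lam j) (mu_gt0 : forall j, 0 < mu j).
Hypothesis lam_mu : forall j, lam j = mu j.

Let D := drift_matrix lam mu.
Let weight (x : 'cV[R]_n.+1) j := lam j * x j 0.

Lemma drift_matrix_mulE (x : 'cV_n.+1) (a : action n.+1) :
  (D *m x) (enum_rank a) 0 = drift_flux a (weight x) / total_rate lam mu a.
Proof.
rewrite !mxE mulr_suml; apply: eq_bigr => j _.
rewrite /D /drift_matrix !mxE enum_rankK -lam_mu /weight mulrAC.
by congr (_ / _); case: (a j); case: (a (ordS j)) => /=; ring.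
Qed.

Lemma drift_matrix_mul_eq0P (x : 'cV_n.+1) : D *m x = 0 <-> alternating (weight x).
Proof.
rewrite -drift_flux_eq0P; split=> [Dx a | flux0].
  have rate_gt0 := total_rate_gt0 a ord0 lam_gt0 mu_gt0.
  have /eqP := drift_matrix_mulE x a; rewrite Dx mxE eq_sym mulf_eq0 invr_eq0.
  by rewrite (gt_eqF rate_gt0) orbF => /eqP.
apply/matrixP => i j; rewrite ord1 -(enum_valK i) drift_matrix_mulE.
by rewrite flux0 mul0r mxE.
Qed.

Lemma drift_matrix_alpha : ~~ odd n.+1 -> D *m alpha_vec lam = 0.
Proof.
move=> even_n; apply/drift_matrix_mul_eq0P.
have weight_alpha k : weight (alpha_vec lam) k = (-1) ^+ k.
  rewrite /weight mxE mulrCA divff ?gt_eqF // mulr1.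
  by rewrite -signr_odd; case: (odd k).
by move=> k; rewrite !weight_alpha; apply: alternating_sign.
Qed.

Lemma drift_kernel_alpha (x : 'cV_n.+1) :
  D *m x = 0 -> x = weight x ord0 *: alpha_vec lam.
Proof.
move=> /drift_matrix_mul_eq0P /alternatingE alt_x; apply/matrixP => k j.
have lam_k : lam k != 0 by rewrite gt_eqF.
rewrite ord1 !mxE; apply: (mulfI lam_k); rewrite -/(weight x k) alt_x -signr_odd.
by case: (odd k); rewrite /= ?expr0 ?expr1; field.
Qed.

Lemma drift_kernel_odd (x : 'cV_n.+1) : odd n.+1 -> D *m x = 0 -> x = 0.
Proof.
move=> odd_n /drift_matrix_mul_eq0P /(alternating_odd_eq0 odd_n) weight0.
apply/matrixP => k j; have lam_k : lam k != 0 by rewrite gt_eqF.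
by rewrite ord1 !mxE; apply: (mulfI lam_k); rewrite mulr0 -/(weight x k) weight0.
Qed.

End CriticalRing.

Theorem lemma2 (R : realFieldType) (M : nat) (lam mu : 'I_M -> R) :
  (2 <= M)%N ->
  (forall j, 0 < lam j) -> (forall j, 0 < mu j) ->
  (forall j, lam j = mu j) ->
  (\rank (drift_matrix lam mu) = if odd M then M else M.-1)%N /\
  (~~ odd M -> drift_matrix lam mu *m alpha_vec lam = 0).
Proof.
case: M lam mu => [|n] lam mu // _ lam_gt0 mu_gt0 lam_mu.
set D := drift_matrix lam mu; set K := kermx D^T.
have D_alpha := drift_matrix_alpha lam_gt0 mu_gt0 lam_mu.
split=> //.
have rank_D : \rank D = (n.+1 - \rank K)%N.
  by rewrite mxrank_ker mxrank_tr subKn // rank_leq_col.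
have ker_rowP i : D *m (row i K)^T = 0.
  by apply/eqP; rewrite -sub_kermx_tr row_sub.
rewrite rank_D; case: ifP => [odd_n | even_n].
  suff -> : K = 0 by rewrite mxrank0 subn0.
  apply/row_matrixP => i; rewrite row0; apply: trmx_inj; rewrite trmx0.
  exact: drift_kernel_odd odd_n (ker_rowP i).
suff /eqmxP -> : (K == (alpha_vec lam)^T)%MS.
  rewrite rank_rV (_ : _ != 0) ?subn1 //; apply/eqP => /matrixP /(_ 0 ord0).
  by rewrite !mxE mul1r => /eqP; rewrite invr_eq0 gt_eqF.
apply/andP; split.
  have ker_alpha := drift_kernel_alpha lam_gt0 mu_gt0 lam_mu.
  apply/row_subP => i; rewrite -[row i K]trmxK (ker_alpha _ (ker_rowP i)).
  by rewrite linearZ /= scalemx_sub.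
by rewrite sub_kermx_tr trmxK D_alpha ?even_n.
Qed.
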